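(* Let $N\ge1$, $\Psi_N$, $\Lambda_N$, $J_N$ be as follows: $(\Psi_N)_{jk}=\binom{j}{k}$ for $0\le j,k<N$; $\Lambda_N=\mathrm{diag}(1,-1,\dots,(-1)^{N-1})$; $J_N$ is the symmetric tridiagonal matrix with $(J_N)_{kk}=k(2k^2+3k+2-N^2)$ and $(J_N)_{k,k+1}=(J_N)_{k+1,k}=(k+1)(N^2-(k+1)^2)$. If $\vec v$ is an eigenvector of $J_N$ with eigenvalue $\lambda$, then $\Psi_N\Lambda_N\vec v$ (the signed binomial transform $w_j=\sum_{k=0}^{N-1}\binom{j}{k}(-1)^kv_k$) is an eigenvector of $J_N$ with eigenvalue $N^2-1-\lambda$. In particular, the spectrum of $J_N$ is invariant under $\lambda\mapsto N^2-1-\lambda$.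
   Context: Matrix indices start at $0$. *)

From HB Require Import structures.
From mathcomp Require Import all_boot all_order all_algebra.
Set Implicit Arguments. Unset Strict Implicit. Unset Printing Implicit Defensive.
Import Order.TTheory GRing.Theory Num.Theory.
Local Open Scope ring_scope.

Definition PsiN (R : nzRingType) (N : nat) : 'M[R]_N :=
  \matrix_(j < N, k < N) ('C(j, k))%:R.

Definition LambdaN (R : nzRingType) (N : nat) : 'M[R]_N :=
  \matrix_(j < N, k < N) (if j == k then (-1) ^+ j else 0).

Definition JN (R : nzRingType) (N : nat) : 'M[R]_N :=
  \matrix_(j < N, k < N)
    (if j == k then
       ((j%:Z) * (2 * (j%:Z) ^+ 2 + 3 * j%:Z + 2 - (N%:Z) ^+ 2))%:~R
     else if k == j.+1 :> nat then
       ((k%:Z) * ((N%:Z) ^+ 2 - (k%:Z) ^+ 2))%:~R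
     else if j == k.+1 :> nat then
       ((j%:Z) * ((N%:Z) ^+ 2 - (j%:Z) ^+ 2))%:~R
     else 0).

From HB Require Import structures.
From mathcomp Require Import all_boot all_order all_algebra.
From mathcomp Require Import ring zify.
Import Order.TTheory GRing.Theory Num.Theory.
Local Open Scope ring_scope.

(* With M := Psi_N Lambda_N, the heart of the matter is the matrix identity
   J M + M J = (N^2 - 1) M.  Entrywise, after dividing out the sign (-1)^l, it
   is a polynomial identity in j, l, N between the binomial coefficients
   C(j-1,l), C(j,l), C(j+1,l), C(j,l-1), C(j,l+1), which follows from the four
   elementary recurrences linking them to C(j,l).  Since M is lower triangular
   with diagonal entries +-1 it is invertible, and
   J (M v) = (N^2 - 1) M v - M J v = (N^2 - 1 - lambda) M v. *)

Lemma binomial_recurrences_identity (R : comPzRingType) (j l N c cjm cjp clm clp : R) :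
  j * cjm = (j - l) * c ->
  (l + 1) * clp = (j - l) * c ->
  (j + 1) * clm = l * c + l * clm ->
  cjp = c + clm ->
  j * (N ^+ 2 - j ^+ 2) * cjm + j * (2 * j ^+ 2 + 3 * j + 2 - N ^+ 2) * c
  + (j + 1) * (N ^+ 2 - (j + 1) ^+ 2) * cjp - l * (N ^+ 2 - l ^+ 2) * clm
  + l * (2 * l ^+ 2 + 3 * l + 2 - N ^+ 2) * c
  - (l + 1) * (N ^+ 2 - (l + 1) ^+ 2) * clp
  = (N ^+ 2 - 1) * c.
Proof.
move=> ejm elp elm ejp; apply/eqP; rewrite -subr_eq0.
set P := N ^+ 2 - ((j + 1) ^+ 2 + (j + 1) * l + l ^+ 2).
have -> : j * (N ^+ 2 - j ^+ 2) * cjm + j * (2 * j ^+ 2 + 3 * j + 2 - N ^+ 2) * c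
  + (j + 1) * (N ^+ 2 - (j + 1) ^+ 2) * cjp - l * (N ^+ 2 - l ^+ 2) * clm
  + l * (2 * l ^+ 2 + 3 * l + 2 - N ^+ 2) * c
  - (l + 1) * (N ^+ 2 - (l + 1) ^+ 2) * clp - (N ^+ 2 - 1) * c =
  (N ^+ 2 - j ^+ 2) * (j * cjm - (j - l) * c)
  - (N ^+ 2 - (l + 1) ^+ 2) * ((l + 1) * clp - (j - l) * c)
  + P * ((j + 1) * clm - l * c - l * clm)
  + (j + 1) * (N ^+ 2 - (j + 1) ^+ 2) * (cjp - c - clm).
  by rewrite /P; ring.
by rewrite ejm elp elm ejp; apply/eqP; ring.
Qed.

(* [binp j l] is C(j, l - 1), set to 0 for l = 0 instead of C(j, 0). *)
Definition binp (j l : nat) : nat := if l is l'.+1 then 'C(j, l') else 0.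

Lemma mul_binp (j l : nat) : (j.+1 * binp j l = l * 'C(j, l) + l * binp j l)%N.
Proof.
case: l => [|l] /=; first by rewrite !muln0.
case: (leqP l j) => [le_lj|lt_jl].
  by rewrite mul_bin_left -mulnDl; congr (_ * _)%N; lia.
by rewrite !bin_small //; lia.
Qed.

Lemma binS_binp (j l : nat) : 'C(j.+1, l) = ('C(j, l) + binp j l)%N.
Proof. by case: l => [|l] /=; rewrite ?bin0 ?binS. Qed.

Lemma natr_mul_bin_sub (R : pzRingType) {j l c d : nat} :
  (c * d = (j - l) * 'C(j, l))%N -> c%:R * d%:R = (j%:R - l%:R) * 'C(j, l)%:R :> R.
Proof.
rewrite -natrM => ->; case: (leqP l j) => [le_lj|lt_jl]; first by rewrite natrM natrB.
by rewrite bin_small // !muln0 mulr0.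
Qed.

Definition JN_diag (R : nzRingType) (N n : nat) : R :=
  n%:R * (2 * n%:R ^+ 2 + 3 * n%:R + 2 - N%:R ^+ 2).

(* The entry of J_N at (n - 1, n); it vanishes at n = 0 and n = N, which lets
   the sums below run past the boundary of the matrix. *)
Definition JN_off (R : nzRingType) (N n : nat) : R := n%:R * (N%:R ^+ 2 - n%:R ^+ 2).

Definition sbin (R : nzRingType) (j l : nat) : R := 'C(j, l)%:R * (-1) ^+ l.

Lemma big_ord_succ_eq (R : nzRingType) (F : nat -> R) (n i : nat) :
  \sum_(k < n | k.+1 == i) F k = if (0 < i)%N && (i.-1 < n)%N then F i.-1 else 0.
Proof.
case: i => [|i] /=; first by rewrite big_pred0.
by under eq_bigl => k do rewrite eqSS; rewrite big_ord1_eq.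
Qed.

Section PsiLambda.

Variables (R : comNzRingType) (N : nat).

Local Notation M := (PsiN R N *m LambdaN R N).

Lemma JN_offN : JN_off R N N = 0.
Proof. by rewrite /JN_off subrr mulr0. Qed.

Lemma JN_off0 : JN_off R N 0 = 0.
Proof. by rewrite /JN_off mul0r. Qed.

Lemma JN_entry (j k : 'I_N) :
  JN R N j k = (if k == j :> nat then JN_diag R N j else 0)
    + (if k == j.+1 :> nat then JN_off R N k else 0)
    + (if k.+1 == j :> nat then JN_off R N j else 0).
Proof.
have cast_diag : (j%:Z * (2 * j%:Z ^+ 2 + 3 * j%:Z + 2 - N%:Z ^+ 2))%:~R = JN_diag R N j.
  rewrite /JN_diag !(intrM, intrD, intrB, rmorphXn, rmorph_nat) -!pmulrn; ring.
have cast_off n : (n%:Z * (N%:Z ^+ 2 - n%:Z ^+ 2))%:~R = JN_off R N n.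
  rewrite /JN_off !(intrM, intrB, rmorphXn, rmorph_nat) -!pmulrn; ring.
rewrite mxE cast_diag !cast_off.
have [/val_inj ->|ne_jk] := eqVneq (j : nat) k.
  by rewrite eqxx !eqn_leq ltnn leqnSn ?andbF /= !addr0.
rewrite ifF ?add0r ?[k.+1 == _]eq_sym; last exact/negbTE.
case: ifP => [/eqP k_eq|_]; last by rewrite add0r.
by rewrite ifF ?addr0 //; apply/eqP; lia.
Qed.

Lemma PsiLambda_entry (j k : 'I_N) : M j k = sbin R j k.
Proof.
rewrite mxE (bigD1 k) //= !mxE eqxx big1 ?addr0 // => i ne_ik.
by rewrite !mxE (negbTE ne_ik) mulr0.
Qed.

Lemma JN_PsiLambda_entry (j l : 'I_N) :
  (JN R N *m M) j l = JN_diag R N j * sbin R j l + JN_off R N j.+1 * sbin R j.+1 l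
                      + JN_off R N j * sbin R j.-1 l.
Proof.
rewrite mxE.
under eq_bigr => k _ do rewrite JN_entry PsiLambda_entry !mulrDl !(fun_if (@GRing.mul R ^~ _)) !mul0r.
rewrite !big_split /= -!big_mkcond.
rewrite (big_ord1_eq _ (fun k => JN_diag R N j * sbin R k l)).
rewrite (big_ord1_eq _ (fun k => JN_off R N k * sbin R k l)).
rewrite (@big_ord_succ_eq _ (fun k => JN_off R N j * sbin R k l)) ltn_ord.
congr (_ + _ + _).
  case: ifP => // /negbT; rewrite -leqNgt => le_Nj1.
  have -> : j.+1 = N by apply/eqP; rewrite eqn_leq le_Nj1 ltn_ord.
  by rewrite JN_offN mul0r.
case: (j : nat) (ltn_ord j) => [|i] /= lt_iN; first by rewrite JN_off0 mul0r.
by rewrite (ltnW lt_iN).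
Qed.

Lemma PsiLambda_JN_entry (j l : 'I_N) :
  (M *m JN R N) j l = sbin R j l * JN_diag R N l + sbin R j l.-1 * JN_off R N l
                      + sbin R j l.+1 * JN_off R N l.+1.
Proof.
rewrite mxE.
under eq_bigr => k _ do rewrite JN_entry PsiLambda_entry !mulrDr
  !(fun_if (@GRing.mul R _)) !mulr0 [l == k :> nat]eq_sym [l == k.+1 :> nat]eq_sym [l.+1 == k]eq_sym.
rewrite !big_split /= -!big_mkcond.
rewrite (big_ord1_eq _ (fun k => sbin R j k * JN_diag R N k)).
rewrite (@big_ord_succ_eq _ (fun k => sbin R j k * JN_off R N l)).
rewrite (big_ord1_eq _ (fun k => sbin R j k * JN_off R N k)) ltn_ord.
congr (_ + _ + _).
  case: (l : nat) (ltn_ord l) => [|i] /= lt_iN; first by rewrite JN_off0 mulr0.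
  by rewrite (ltnW lt_iN).
case: ifP => // /negbT; rewrite -leqNgt => le_Nl1.
have -> : l.+1 = N by apply/eqP; rewrite eqn_leq le_Nl1 ltn_ord.
by rewrite JN_offN mulr0.
Qed.

Lemma JN_PsiLambda_anticomm :
  JN R N *m M + M *m JN R N = ((N ^ 2)%:R - 1) *: M.
Proof.
apply/matrixP => j l; rewrite mxE JN_PsiLambda_entry PsiLambda_JN_entry.
rewrite [in RHS]mxE PsiLambda_entry.
have elp : (l%:R + 1) * 'C(j, l.+1)%:R = (j%:R - l%:R) * 'C(j, l)%:R :> R.
  by rewrite natr1 (natr_mul_bin_sub R (mul_bin_left j l)).
have elm : (j%:R + 1) * (binp j l)%:R = l%:R * 'C(j, l)%:R + l%:R * (binp j l)%:R :> R.
  by rewrite natr1 -!natrM -natrD mul_binp.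
have ejp : 'C(j.+1, l)%:R = 'C(j, l)%:R + (binp j l)%:R :> R by rewrite binS_binp natrD.
have := @binomial_recurrences_identity R _ _ N%:R _ _ _ _ _
  (natr_mul_bin_sub R (mul_bin_down j l)) elp elm ejp.
move=> recurrences; rewrite natrX /sbin [in RHS]mulrA -recurrences.
have -> : 'C(j, l.-1)%:R * (-1) ^+ l.-1 * JN_off R N l
          = - (binp j l)%:R * (-1) ^+ l * JN_off R N l :> R.
  by case: (l : nat) => [|i]; rewrite ?JN_off0 ?mulr0 // exprS; ring.
rewrite /JN_diag /JN_off [(-1) ^+ l.+1]exprS; ring.
Qed.

End PsiLambda.

Lemma PsiLambda_unitmx (R : comUnitRingType) (N : nat) : PsiN R N *m LambdaN R N \in unitmx.
Proof.
have lower : is_trig_mx (PsiN R N *m LambdaN R N).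
  by apply/is_trig_mxP => i k lt_ik; rewrite PsiLambda_entry /sbin bin_small // mul0r.
rewrite unitmxE det_trig // big_seq_cond rpred_prod // => i _.
by rewrite PsiLambda_entry /sbin binn mul1r unitrX // unitrN1.
Qed.

Theorem mainTheorem9 (R : fieldType) (N : nat) (hN : (1 <= N)%N)
    (v : 'cV[R]_N) (lambda : R) :
  v != 0 -> JN R N *m v = lambda *: v ->
  let w := PsiN R N *m LambdaN R N *m v in
  w != 0 /\ JN R N *m w = ((N ^ 2)%:R - 1 - lambda) *: w.
Proof.
move=> v_neq0 eigen_v w; split.
  apply: contra_neq v_neq0 => w_eq0.
  by rewrite -[v](mulKmx (PsiLambda_unitmx R N)) -/w w_eq0 mulmx0.
rewrite /w mulmxA -(addrK (PsiN R N *m LambdaN R N *m JN R N) (JN R N *m _)).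
rewrite JN_PsiLambda_anticomm mulmxBl -scalemxAl -[_ *m JN R N *m v]mulmxA eigen_v.
by rewrite -scalemxAr !scalerBl.
Qed.
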